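(* Consider a position in the $K^4$-building game on a complete graph board $G$ in which it is the first player's turn. Suppose that $G$ contains a realised promising graph $H$ (of one of the six types described in the context), and suppose that there is no monochromatic $K^4$ on the board and no threat by the second player on the board, even if the vulnerable edges of $H$ are additionally regarded as edges claimed by the second player. Then the first player can play a sequence of moves, each of which creates a threat, the last of which creates two threats simultaneously; consequently the first player wins the game.
   Context: The $K^4$-building game on a complete graph $G$ (the board): two players, the first player (red) and the second player (blue), starting with the first player, alternately claim one not-yet-claimed edge of $G$ in their own colour. A player wins as soon as she/he has claimed all six edges on some set of four vertices; if neither ever does, the second player wins. A threat (by a player) is a set of four vertices of the board on which that player has claimed exactly five of the six edges and the sixth edge is unclaimed. Promising graphs. Each type below is a complete graph on the listed vertices with a colouring of some edges; red = claimed by the first player, blue = claimed by the second player, all other edges among the listed vertices are unclaimed, and certain edges are designated vulnerable. Type 1: vertices $a,b,c,d,e$; red $ab,ac,ad,ae,bc,cd$; blue $bd$; no vulnerable edges. Type 2: vertices $a,b,c,d,e$; red $ab,ac,ad,ae,bc$; vulnerable edge $bd$. Type 3: vertices $a,b,c,d,e,f$; red $ab,ac,ad,ae,af,bc$; blue $bd,be$; vulnerable edges $bf, ce$. Type 4: vertices $a,b,c,d,e,f$; red $ab,ac,ad,ae,af,bc$; blue $bd,ef$; vulnerable edges $be,bf$. Type 5: vertices $a,b,c,d,e,f,g$; red $ab,ac,ad,ae,af,ag,bc$; blue $bd,be,bf,ce,df$; vulnerable edges $bg,cd,cf$. Type 6: vertices $a,b,c,d,e,f,g$; red $ab,ac,ad,ae,af,ag,bc$;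 blue $bd,be,bf,cd,ce$; vulnerable edges $bg,cf,ef$. A promising graph of a given type is the coloured complete graph of that type in which additionally the vulnerable edges are claimed by the second player. A realised promising graph in the board $G$ is a set of vertices of $G$ such that the complete subgraph of $G$ on it, with the current claimed edges, is isomorphic (as an edge-coloured graph) to one of the six types above with the vulnerable edges unclaimed; i.e. among these vertices the claimed edges are exactly the red and blue edges listed, and the vulnerable edges (as well as all other unlisted edges) are unclaimed. *)

From mathcomp Require Import all_boot.
Set Implicit Arguments.
Unset Strict Implicit.
Unset Printing Implicit Defensive.

Inductive cell := Free | Red | Blue.

Section Game.
Variable V : eqType.  (* vertex set of the complete-graph board (possibly infinite) *)

(** A position: colour of the edge {x,y}; meaningful for x <> y, and
    required to be symmetric (see [sym_pos]). *)
Definition pos := V -> V -> cell.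

Definition sym_pos (p : pos) : Prop := forall x y, p x y = p y x.

Definition claim (p : pos) (s t : V) (k : cell) : pos :=
  fun x y => if ((x == s) && (y == t)) || ((x == t) && (y == s)) then k else p x y.

Definition mono_K4 (p : pos) (k : cell) : Prop :=
  exists a b c d, uniq [:: a; b; c; d] /\
    [/\ p a b = k, p a c = k, p a d = k, p b c = k & p b d = k /\ p c d = k].

Definition threat (p : pos) (k : cell) (u v w x : V) : Prop :=
  uniq [:: u; v; w; x] /\ p u v = Free /\
    [/\ p u w = k, p u x = k, p v w = k, p v x = k & p w x = k].

Definition has_threat (p : pos) (k : cell) : Prop :=
  exists u v w x, threat p k u v w x.

Definition same_edge (u v u' v' : V) : bool :=
  ((u == u') && (v == v')) || ((u == v') && (v == u')).

Definition creates_threat (p : pos) (s t : V) : Prop :=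
  exists u v w x, threat (claim p s t Red) Red u v w x /\ ~ threat p Red u v w x.

(** [forcing_win p]: with Red to move in [p], Red can play a sequence of
    moves each creating a threat, Blue's reply being forced (all red
    threats share one unclaimed edge, which Blue must claim, and Blue has no
    threat of her own), the last move creating threats with two different
    unclaimed edges while Blue has no threat. *)
Inductive forcing_win : pos -> Prop :=
| fw_double (p : pos) (s t : V) :
    s != t -> p s t = Free ->
    ~ has_threat (claim p s t Red) Blue ->
    creates_threat p s t ->
    (exists u v w x u' v' w' x',
        threat (claim p s t Red) Red u v w x /\
        threat (claim p s t Red) Red u' v' w' x' /\ ~~ same_edge u v u' v') ->
    forcing_win p
| fw_single (p : pos) (s t u v : V) :
    s != t -> p s t = Free ->
    ~ has_threat (claim p s t Red) Blue ->
    creates_threat p s t ->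
    (exists w x, threat (claim p s t Red) Red u v w x) ->
    (forall u' v' w' x', threat (claim p s t Red) Red u' v' w' x' ->
        same_edge u v u' v') ->
    forcing_win (claim (claim p s t Red) u v Blue) ->
    forcing_win p.

(** [red_wins p]: with Red (the first player) to move in [p], Red has a
    strategy that wins (completes a red K^4 before Blue completes a blue
    K^4, within finitely many moves, whatever Blue does). If all edges are
    claimed and nobody has won, the second player wins. *)
Inductive red_wins : pos -> Prop :=
| rw_win (p : pos) (s t : V) :
    s != t -> p s t = Free -> mono_K4 (claim p s t Red) Red -> red_wins p
| rw_step (p : pos) (s t : V) :
    s != t -> p s t = Free ->
    (exists u v, u != v /\ claim p s t Red u v = Free) ->
    (forall u v, u != v -> claim p s t Red u v = Free ->
       ~ mono_K4 (claim (claim p s t Red) u v Blue) Blue /\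
       red_wins (claim (claim p s t Red) u v Blue)) ->
    red_wins p.

End Game.

(** Vertices a,b,c,d,e,f,g are encoded as 0,1,2,3,4,5,6. *)
Inductive ptype := T1 | T2 | T3 | T4 | T5 | T6.

Definition pt_n (T : ptype) : nat :=
  match T with T1 | T2 => 5 | T3 | T4 => 6 | T5 | T6 => 7 end.

Definition pt_red (T : ptype) : seq (nat * nat) :=
  match T with
  | T1 => [:: (0,1); (0,2); (0,3); (0,4); (1,2); (2,3)]
  | T2 => [:: (0,1); (0,2); (0,3); (0,4); (1,2)]
  | T3 | T4 => [:: (0,1); (0,2); (0,3); (0,4); (0,5); (1,2)]
  | T5 | T6 => [:: (0,1); (0,2); (0,3); (0,4); (0,5); (0,6); (1,2)]
  end.

Definition pt_blue (T : ptype) : seq (nat * nat) :=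
  match T with
  | T1 => [:: (1,3)]
  | T2 => [::]
  | T3 => [:: (1,3); (1,4)]
  | T4 => [:: (1,3); (4,5)]
  | T5 => [:: (1,3); (1,4); (1,5); (2,4); (3,5)]
  | T6 => [:: (1,3); (1,4); (1,5); (2,3); (2,4)]
  end.

Definition pt_vul (T : ptype) : seq (nat * nat) :=
  match T with
  | T1 => [::]
  | T2 => [:: (1,3)]
  | T3 => [:: (1,5); (2,4)]
  | T4 => [:: (1,4); (1,5)]
  | T5 => [:: (1,6); (2,3); (2,5)]
  | T6 => [:: (1,6); (2,5); (4,5)]
  end.

Definition in_pairs (i j : nat) (l : seq (nat * nat)) : bool :=
  ((i, j) \in l) || ((j, i) \in l).

(** Colour of the pair {i,j} in the type-T template, vulnerable edges being
    unclaimed. *)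
Definition pt_colour (T : ptype) (i j : nat) : cell :=
  if in_pairs i j (pt_red T) then Red
  else if in_pairs i j (pt_blue T) then Blue else Free.

Definition realised (V : eqType) (p : pos V) (T : ptype) (f : nat -> V) : Prop :=
  (forall i j, i < pt_n T -> j < pt_n T -> f i = f j -> i = j) /\
  (forall i j, i < pt_n T -> j < pt_n T -> i != j -> p (f i) (f j) = pt_colour T i j).

(** The position with the vulnerable edges of the realised H additionally
    regarded as claimed by the second player. *)
Definition with_vulnerable (V : eqType) (p : pos V) (T : ptype) (f : nat -> V) : pos V :=
  foldr (fun ij q => claim q (f ij.1) (f ij.2) Blue) p (pt_vul T).

(* For each of the six types Red has an explicit line of play inside H: every
   move but the last creates a threat whose free edge is a vulnerable edge of H,
   so Blue's reply is forced onto a vulnerable edge, and the last move creates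
   two threats with different free edges, of which Blue can block only one.
   Every position along the line is dominated by the position in which the
   vulnerable edges are blue: its blue edges are blue there and its free edges
   are not red there. Hence a blue threat along the line would give a blue
   threat or a blue K4 in that position, which is excluded. The line is checked
   by computation on the template and transported to the board along f; a move
   that happens to create a second threat with another free edge on the board
   already ends the line. *)

From HB Require Import structures.
From mathcomp Require Import all_boot.
From Stdlib Require Import Classical FunctionalExtensionality.

Set Implicit Arguments.
Unset Strict Implicit.
Unset Printing Implicit Defensive.

Definition cell_eqb (a b : cell) : bool :=
  match a, b with Free, Free | Red, Red | Blue, Blue => true | _, _ => false end.

Lemma cell_eqP : Equality.axiom cell_eqb.
Proof. by case; case; constructor. Qed.

HB.instance Definition _ := hasDecEq.Build cell cell_eqP.

Section Board.
Variable V : eqType.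
Implicit Types (p q : pos V) (k l : cell) (a b s t u v w x y z : V).

Lemma claim_sym q s t k : sym_pos q -> sym_pos (claim q s t k).
Proof.
move=> q_sym x y; rewrite /claim [q x y]q_sym.
by case: (x == s); case: (x == t); case: (y == s); case: (y == t).
Qed.

Lemma claimC q s t k : claim q s t k = claim q t s k.
Proof.
by apply: functional_extensionality => x; apply: functional_extensionality => y;
  rewrite /claim orbC.
Qed.

Lemma claim_other q s t k x y : ~~ same_edge x y s t -> claim q s t k x y = q x y.
Proof. by rewrite /claim /same_edge => /negbTE ->. Qed.

Lemma claim_self q s t k : claim q s t k s t = k.
Proof. by rewrite /claim !eqxx. Qed.

Lemma claim_keep q s t k y z : q y z = k -> claim q s t k y z = k.
Proof. by rewrite /claim; case: ifP. Qed.

Lemma claim_eq_other q s t k l y z : l != k -> claim q s t k y z = l -> q y z = l.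
Proof. by move=> lk; rewrite /claim; case: ifP => // _ kl; rewrite kl eqxx in lk. Qed.

Lemma claim_keep_sym q s t k y z :
  sym_pos q -> q y z != q s t -> claim q s t k y z = q y z.
Proof.
move=> q_sym; rewrite /claim; case: ifP => // /orP[] /andP[/eqP-> /eqP->].
  by rewrite eqxx.
by rewrite q_sym eqxx.
Qed.

Lemma same_edgeC a b u v : same_edge a b u v = same_edge u v a b.
Proof.
by apply/idP/idP; rewrite /same_edge => /orP[] /andP[/eqP-> /eqP->];
  rewrite !eqxx ?orbT.
Qed.

Lemma same_edge_trans a b u v u' v' :
  same_edge a b u v -> same_edge a b u' v' -> same_edge u v u' v'.
Proof.
by rewrite /same_edge => /orP[] /andP[/eqP<- /eqP<-] /orP[] /andP[/eqP<- /eqP<-];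
  rewrite !eqxx ?orbT.
Qed.

Lemma uniq4 a b c d : uniq [:: a; b; c; d] ->
  [/\ a != b, a != c, a != d, b != c & b != d /\ c != d].
Proof.
rewrite /= !inE !negb_or => /andP[/and3P[? ? ?] /andP[/andP[? ?] /andP[? _]]].
by split.
Qed.

Definition threatb p k u v w x : bool :=
  [&& uniq [:: u; v; w; x], p u v == Free, p u w == k, p u x == k,
      p v w == k, p v x == k & p w x == k].

Lemma threatP p k u v w x : reflect (threat p k u v w x) (threatb p k u v w x).
Proof.
rewrite /threatb; apply: (iffP idP) => [|[uvwx [-> [-> -> -> -> ->]]]]; last first.
  by rewrite uvwx !eqxx.
by case/and5P=> ? /eqP? /eqP? /eqP? /and3P[/eqP? /eqP? /eqP?]; split; last split.
Qed.

Lemma mono_K4_claim_other q s t k l :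
  l != k -> mono_K4 (claim q s t k) l -> mono_K4 q l.
Proof.
move=> l_k [a [b [c [d [abcd [ab ac ad bc [bd cd]]]]]]].
by exists a, b, c, d; do !split=> //; apply: (claim_eq_other l_k); eassumption.
Qed.

Definition mono_on p k (S : seq V) :=
  forall y z, y \in S -> z \in S -> y != z -> p y z = k.

Lemma mono_K4_mono_on p k : sym_pos p -> mono_K4 p k ->
  exists a b c d, uniq [:: a; b; c; d] /\ mono_on p k [:: a; b; c; d].
Proof.
move=> p_sym [a [b [c [d [abcd [ab ac ad bc [bd cd]]]]]]].
exists a, b, c, d; split=> // y z; rewrite !inE.
by move=> /or4P[] /eqP-> /or4P[] /eqP->; rewrite ?eqxx // => _; rewrite // p_sym.
Qed.

Lemma mono_on_mono_K4 p k a b c d :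
  uniq [:: a; b; c; d] -> mono_on p k [:: a; b; c; d] -> mono_K4 p k.
Proof.
move=> abcd abcd_mono; have [? ? ? ? [? ?]] := uniq4 abcd.
exists a, b, c, d; split=> //.
by split; try split; apply: abcd_mono; rewrite ?inE ?eqxx ?orbT.
Qed.

Lemma perm4_head (S : seq V) a b : uniq S -> size S = 4 ->
  a \in S -> b \in S -> a != b -> exists w x, perm_eq S [:: a; b; w; x].
Proof.
move=> S_uniq S_size aS bS a_b.
have bS' : b \in rem a S by rewrite (mem_rem_uniq _ S_uniq) inE eq_sym a_b.
have : size (rem b (rem a S)) = 2 by rewrite !size_rem // S_size.
case E : (rem b (rem a S)) => [|w [|x [|? ?]]] // _.
exists w, x; apply: (perm_trans (perm_to_rem aS)); rewrite perm_cons -E.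
exact: perm_to_rem.
Qed.

(* A colour-k K4 created by claiming {a,b} either existed before or used
   {a,b}, whose other five edges then formed a threat. *)
Lemma mono_K4_claim q a b k : sym_pos q -> q a b = Free -> a != b ->
  mono_K4 (claim q a b k) k -> mono_K4 q k \/ has_threat q k.
Proof.
move=> q_sym ab_free a_b /(mono_K4_mono_on (claim_sym a b k q_sym)).
case=> a0 [b0 [c0 [d0 [S_uniq S_mono]]]].
set S := [:: a0; b0; c0; d0] in S_uniq S_mono.
have mono_off y z : y \in S -> z \in S -> y != z -> ~~ same_edge y z a b -> q y z = k.
  by move=> yS zS y_z /(claim_other q k) <-; apply: S_mono.
case: (boolP ((a \in S) && (b \in S))) => [/andP[aS bS] | abS]; last first.
  left; apply: (mono_on_mono_K4 S_uniq) => y z yS zS y_z; apply: mono_off => //.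
  apply: contra abS; rewrite /same_edge.
  by case/orP=> /andP[/eqP<- /eqP<-]; rewrite yS zS.
right; have [w [x S_perm]] := perm4_head S_uniq (erefl _) aS bS a_b.
have abwx : uniq [:: a; b; w; x] by rewrite -(perm_uniq S_perm).
have [_ a_w a_x b_w [b_x w_x]] := uniq4 abwx.
have mono_abwx y z : y \in [:: a; b; w; x] -> z \in [:: a; b; w; x] -> y != z ->
    z != a -> z != b -> q y z = k.
  move=> yS zS y_z z_a z_b; apply: mono_off; rewrite ?(perm_mem S_perm) //.
  by rewrite /same_edge (negbTE z_a) (negbTE z_b) !andbF.
exists a, b, w, x; split=> //; split=> //.
by split; apply: mono_abwx; rewrite ?inE ?eqxx ?orbT // eq_sym.
Qed.

Lemma blue_reply_no_K4 q a b : sym_pos q -> q a b = Free -> a != b ->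
  ~ mono_K4 q Blue -> ~ has_threat q Blue -> ~ mono_K4 (claim q a b Blue) Blue.
Proof. by move=> q_sym ab_free a_b ? ? /(mono_K4_claim q_sym ab_free a_b) []. Qed.

Lemma threat_free_edge q k u v w x :
  threat q k u v w x -> exists a b, a != b /\ q a b = Free.
Proof. by case=> uvwx [uv_free _]; have [u_v _ _ _ _] := uniq4 uvwx; exists u, v. Qed.

Lemma red_wins_unblocked q u v w x a b : sym_pos q -> threat q Red u v w x ->
  q a b = Free -> ~~ same_edge a b u v -> red_wins (claim q a b Blue).
Proof.
move=> q_sym [uvwx [uv_free [uw ux vw vx wx]]] ab_free ab_uv.
have [u_v _ _ _ _] := uniq4 uvwx.
apply: (rw_win (s := u) (t := v)) => //; first by rewrite claim_other // same_edgeC.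
have keep y z : q y z = Red -> claim (claim q a b Blue) u v Red y z = Red.
  by move=> yz; apply/claim_keep; rewrite claim_keep_sym // yz ab_free.
exists u, v, w, x; do !split=> //; last by apply: keep.
all: by [exact: claim_self | apply: keep].
Qed.

Lemma forcing_win_red_wins q :
  forcing_win q -> sym_pos q -> ~ mono_K4 q Blue -> red_wins q.
Proof.
elim=> {q}
    [ q s t s_t st_free noT _ [u [v [w [x [u' [v' [w' [x' [th [th' uv_u'v']]]]]]]]]]
    | q s t u v s_t st_free noT _ [w [x th]] _ _ IH ] q_sym noK4;
  have q'_sym := claim_sym s t Red q_sym;
  have noK4' : ~ mono_K4 (claim q s t Red) Blue
    by move/mono_K4_claim_other => /(_ isT)/noK4.
- apply: (rw_step s_t st_free (threat_free_edge th)) => a b a_b ab_free.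
  split; first exact: blue_reply_no_K4.
  case: (boolP (same_edge a b u v)) => ab_uv; last exact: red_wins_unblocked th _ _.
  apply: (red_wins_unblocked q'_sym th' ab_free).
  by apply: contra uv_u'v'; apply: same_edge_trans.
- apply: (rw_step s_t st_free (threat_free_edge th)) => a b a_b ab_free.
  have noK4'' := blue_reply_no_K4 q'_sym ab_free a_b noK4' noT.
  split=> //.
  case: (boolP (same_edge a b u v)) => ab_uv; last exact: red_wins_unblocked th _ _.
  have E : claim (claim q s t Red) a b Blue = claim (claim q s t Red) u v Blue.
    by case/orP: ab_uv => /andP[/eqP-> /eqP->]; rewrite // claimC.
  by rewrite E in noK4'' *; apply: IH => //; apply: claim_sym.
Qed.

End Board.

Section Domination.
Variables (V : eqType) (wv : pos V).
Implicit Types (q : pos V) (s t : V).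

Definition dominated q := forall x y,
  (q x y = Blue -> wv x y = Blue) /\ (q x y = Free -> wv x y <> Red).

(* The free edge of a blue threat in q is not red in wv, so in wv the threat
   either survives or is completed to a blue K4. *)
Lemma dominated_no_blue_threat q : ~ has_threat wv Blue -> ~ mono_K4 wv Blue ->
  dominated q -> ~ has_threat q Blue.
Proof.
move=> wv_noT wv_noK4 q_wv [u [v [w [x [uvwx [uv_free [uw ux vw vx wx]]]]]]].
have blue y z : q y z = Blue -> wv y z = Blue by case: (q_wv y z).
have := proj2 (q_wv u v) uv_free; case uv : (wv u v) => // _.
- by apply: wv_noT; exists u, v, w, x; do !split=> //; apply: blue.
- by apply: wv_noK4; exists u, v, w, x; do !split=> //; apply: blue.
Qed.

Lemma dominated_claim_red q s t : dominated q -> dominated (claim q s t Red).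
Proof. by move=> q_wv x y; rewrite /claim; case: ifP => // _; apply: q_wv. Qed.

Lemma dominated_claim_blue q s t : sym_pos wv -> wv s t = Blue ->
  dominated q -> dominated (claim q s t Blue).
Proof.
move=> wv_sym st_blue q_wv x y; rewrite /claim.
case: ifP => [/orP[] /andP[/eqP-> /eqP->] | _]; last exact: q_wv.
  by rewrite st_blue.
by rewrite wv_sym st_blue.
Qed.

End Domination.

Section Embedding.
Variables (V : eqType) (f : nat -> V) (n : nat).
Hypothesis f_inj : {in gtn n &, injective f}.

Definition agree (q : pos V) (L : pos nat) :=
  forall i j, i < n -> j < n -> i != j -> q (f i) (f j) = L i j.

Lemma inj_f_eq i j : i < n -> j < n -> (f i == f j) = (i == j).
Proof. by move=> i_n j_n; apply/eqP/eqP => [|-> //]; apply: f_inj. Qed.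

Lemma agree_claim q L s t k : s < n -> t < n -> agree q L ->
  agree (claim q (f s) (f t) k) (claim L s t k).
Proof. by move=> s_n t_n qL i j i_n j_n i_j; rewrite /claim !inj_f_eq // qL. Qed.

Lemma agree_threat q L k u v w x : agree q L -> all (gtn n) [:: u; v; w; x] ->
  threat q k (f u) (f v) (f w) (f x) <-> threat L k u v w x.
Proof.
move=> qL uvwx_n; have /and4P[u_n v_n w_n /andP[x_n _]] := uvwx_n.
rewrite /threat -[[:: f u; f v; f w; f x]]/(map f [:: u; v; w; x]).
have uvwx_sub : {subset [:: u; v; w; x] <= gtn n} by move=> y /(allP uvwx_n).
rewrite (map_inj_in_uniq (sub_in2 uvwx_sub f_inj)).
case: (boolP (uniq _)) => [uvwx | _]; last by split=> -[].
by have [? ? ? ? [? ?]] := uniq4 uvwx; rewrite !qL.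
Qed.

Definition threat_move (L : pos nat) s t u v w x :=
  [&& s < n, t < n, all (gtn n) [:: u; v; w; x], s != t, L s t == Free,
      threatb (claim L s t Red) Red u v w x & ~~ threatb L Red u v w x].

(* [Single s t u v w x]: Red claims {s,t}, creating a threat on {u,v,w,x} whose
   free edge {u,v} Blue must claim; [Double] adds a second threat
   {u',v',w',x'} with a different free edge. *)
Inductive single_move := Single (s t u v w x : nat).
Inductive double_move := Double (s t u v w x u' v' w' x' : nat).

Definition check_double (L : pos nat) (m : double_move) :=
  let: Double s t u v w x u' v' w' x' := m in
  [&& threat_move L s t u v w x, all (gtn n) [:: u'; v'; w'; x'],
      threatb (claim L s t Red) Red u' v' w' x' & ~~ same_edge u v u' v'].

Fixpoint check_line (vul : seq (nat * nat)) (L : pos nat) (ms : seq single_move)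
    (fin : double_move) : bool :=
  match ms with
  | [::] => check_double L fin
  | Single s t u v w x :: ms' =>
    [&& threat_move L s t u v w x, in_pairs u v vul &
        check_line vul (claim (claim L s t Red) u v Blue) ms' fin]
  end.

Variables (wv : pos V) (vul : seq (nat * nat)).
Hypotheses (wv_sym : sym_pos wv) (wv_noT : ~ has_threat wv Blue)
  (wv_noK4 : ~ mono_K4 wv Blue)
  (vul_blue : forall i j, in_pairs i j vul -> wv (f i) (f j) = Blue).

Lemma threat_move_sound q L s t u v w x :
  agree q L -> dominated wv q -> threat_move L s t u v w x ->
  [/\ f s != f t, q (f s) (f t) = Free, ~ has_threat (claim q (f s) (f t) Red) Blue,
      creates_threat q (f s) (f t)
    & threat (claim q (f s) (f t) Red) Red (f u) (f v) (f w) (f x)].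
Proof.
move=> qL q_wv /and5P[s_n t_n uvwx_n s_t /and3P[/eqP st_free th new]].
have th' : threat (claim q (f s) (f t) Red) Red (f u) (f v) (f w) (f x).
  exact/(agree_threat _ (agree_claim Red s_n t_n qL) uvwx_n)/threatP.
split=> //; first by rewrite inj_f_eq.
- by rewrite qL.
- exact/(dominated_no_blue_threat wv_noT wv_noK4)/dominated_claim_red.
- exists (f u), (f v), (f w), (f x); split=> // /(agree_threat _ qL uvwx_n)/threatP.
  exact/negP.
Qed.

Lemma threat_move_bounds L s t u v w x :
  threat_move L s t u v w x -> [/\ s < n, t < n, u < n & v < n].
Proof. by case/and3P=> ? ? /andP[/and3P[? ? _] _]. Qed.

Lemma check_double_forcing_win q L m :
  agree q L -> dominated wv q -> check_double L m -> forcing_win q.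
Proof.
case: m => s t u v w x u' v' w' x' qL q_wv /and4P[mv u'v'w'x'_n th' uv_u'v'].
have [s_t st_free noT new th] := threat_move_sound qL q_wv mv.
have [s_n t_n u_n v_n] := threat_move_bounds mv.
have /and3P[u'_n v'_n _] := u'v'w'x'_n.
apply: (fw_double s_t st_free noT new).
exists (f u), (f v), (f w), (f x), (f u'), (f v'), (f w'), (f x'); split=> //; split.
  exact/(agree_threat _ (agree_claim Red s_n t_n qL) u'v'w'x'_n)/threatP.
by rewrite /same_edge !inj_f_eq.
Qed.

Lemma check_line_forcing_win ms fin q L :
  agree q L -> dominated wv q -> check_line vul L ms fin -> forcing_win q.
Proof.
elim: ms q L => [|[s t u v w x] ms IH] q L qL q_wv /=.
  exact: check_double_forcing_win.
case/and3P=> mv uv_vul check.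
have [s_t st_free noT new th] := threat_move_sound qL q_wv mv.
have [s_n t_n u_n v_n] := threat_move_bounds mv.
case: (classic (exists u' v' w' x', threat (claim q (f s) (f t) Red) Red u' v' w' x'
                 /\ ~~ same_edge (f u) (f v) u' v')).
  case=> u' [v' [w' [x' [th' uv_u'v']]]]; apply: (fw_double s_t st_free noT new).
  by exists (f u), (f v), (f w), (f x), u', v', w', x'.
move=> uv_only; apply: (fw_single (u := f u) (v := f v) s_t st_free noT new).
- by exists (f w), (f x).
- move=> u' v' w' x' th'; apply/negPn/negP => uv_u'v'.
  by apply: uv_only; exists u', v', w', x'.
- apply: (IH _ _ _ _ check); first by apply: agree_claim => //; apply: agree_claim.
  exact/(dominated_claim_blue wv_sym (vul_blue uv_vul))/dominated_claim_red.
Qed.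

End Embedding.

Section WithVulnerable.
Variables (V : eqType) (p : pos V) (T : ptype) (f : nat -> V).

Lemma with_vulnerable_sym : sym_pos p -> sym_pos (with_vulnerable p T f).
Proof.
by rewrite /with_vulnerable; elim: (pt_vul T) => //= ij l IH /IH; apply: claim_sym.
Qed.

Lemma dominated_with_vulnerable : dominated (with_vulnerable p T f) p.
Proof.
rewrite /with_vulnerable; elim: (pt_vul T) => [|ij l IH] x y /=; first by split=> // ->.
by rewrite /claim; case: ifP => _; last exact: IH.
Qed.

Lemma with_vulnerable_vul i j : sym_pos p ->
  in_pairs i j (pt_vul T) -> with_vulnerable p T f (f i) (f j) = Blue.
Proof.
move=> p_sym.
have blue i' j' : (i', j') \in pt_vul T -> with_vulnerable p T f (f i') (f j') = Blue.
  rewrite /with_vulnerable; elim: (pt_vul T) => //= -[i0 j0] l IH.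
  rewrite inE /claim => /orP[/eqP[-> ->] | /IH ->]; first by rewrite !eqxx.
  by case: ifP.
by case/orP=> [/blue // | /blue ji]; rewrite with_vulnerable_sym.
Qed.

End WithVulnerable.

Definition strategy (T : ptype) : seq single_move * double_move :=
  match T with
  | T1 => ([::], Double 2 4 1 4 0 2 3 4 0 2)
  | T2 => ([:: Single 2 3 1 3 0 2], Double 2 4 1 4 0 2 3 4 0 2)
  | T3 => ([:: Single 2 5 1 5 0 2; Single 4 5 2 4 0 5], Double 3 5 2 3 0 5 3 4 0 5)
  | T4 => ([:: Single 2 4 1 4 0 2; Single 2 5 1 5 0 2], Double 2 3 3 4 0 2 3 5 0 2)
  | T5 => ([:: Single 2 6 1 6 0 2; Single 3 6 2 3 0 6; Single 5 6 2 5 0 6],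
           Double 4 6 3 4 0 6 4 5 0 6)
  | T6 => ([:: Single 2 6 1 6 0 2; Single 5 6 2 5 0 6; Single 4 6 4 5 0 6],
           Double 3 6 3 4 0 6 3 5 0 6)
  end.

Lemma strategy_check T :
  check_line (pt_n T) (pt_vul T) (pt_colour T) (strategy T).1 (strategy T).2.
Proof. by case: T; vm_compute. Qed.

Theorem lemma3p2 (V : eqType) (p : pos V) (T : ptype) (f : nat -> V) :
  sym_pos p ->
  realised p T f ->
  ~ mono_K4 p Red -> ~ mono_K4 p Blue -> ~ has_threat p Blue ->
  ~ mono_K4 (with_vulnerable p T f) Red ->
  ~ mono_K4 (with_vulnerable p T f) Blue ->
  ~ has_threat (with_vulnerable p T f) Blue ->
  forcing_win p /\ red_wins p.
Proof.
move=> p_sym [f_inj p_agree] _ noK4 _ _ wv_noK4 wv_noT.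
have fw : forcing_win p.
  apply: (check_line_forcing_win f_inj (with_vulnerable_sym T f p_sym) wv_noT wv_noK4
            _ p_agree (dominated_with_vulnerable p T f) (strategy_check T)).
  by move=> i j; apply: with_vulnerable_vul.
by split; last exact: forcing_win_red_wins.
Qed.
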